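(* Let $\lambda,\mu\in P^+$ for $\mathfrak g$ of type $A_2$. Then there exists a bijection $\mathcal S^{A}_{\lambda,\mu}\to\mathcal T^{A}_{\lambda,\mu}$.
   Context: $m_i=\lambda(h_i)$, $n_i=\mu(h_i)$ ($i=1,2$) are non-negative integers. $\mathcal S^{A}_{\lambda,\mu}=\{(a,b,c)\in\mathbb Z_+^3: a\le\min\{m_1,n_1\},\ c\le\min\{m_2,n_2\},\ a+b+c\le\min\{m_1+m_2,n_1+n_2\},\ 2a+b\le m_1+n_1,\ 2c+b\le m_2+n_2\}$. $\mathcal T^{A}_{\lambda,\mu}=\{(a,b,c)\in\mathbb Z_+^3: b\le\min\{m_2,n_1\},\ a+b-c\le n_1,\ b+c-a\le m_2,\ c\le n_2,\ a\le m_1,\ 2a+b-c\le m_1+n_1,\ 2c+b-a\le m_2+n_2\}$. *)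

From mathcomp Require Import all_boot.
Set Implicit Arguments. Unset Strict Implicit. Unset Printing Implicit Defensive.

(* Type A_2: lambda, mu dominant weights, encoded by m_i = lambda(h_i),
   n_i = mu(h_i) (i = 1,2), arbitrary natural numbers.
   Triples (a,b,c) in Z_+^3 are encoded as nat * nat * nat. *)

Definition SA (m1 m2 n1 n2 : nat) (x : nat * nat * nat) : bool :=
  let: (a, b, c) := x in
  [&& a <= minn m1 n1, c <= minn m2 n2,
      a + b + c <= minn (m1 + m2) (n1 + n2),
      2 * a + b <= m1 + n1 & 2 * c + b <= m2 + n2].

(* Integer inequalities with subtraction are written with the subtracted
   terms moved to the other side (equivalent over Z, no truncation). *)
Definition TA (m1 m2 n1 n2 : nat) (x : nat * nat * nat) : bool :=
  let: (a, b, c) := x in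
  [&& b <= minn m2 n1,
      a + b <= n1 + c,
      b + c <= m2 + a,
      c <= n2, a <= m1,
      2 * a + b <= m1 + n1 + c
    & 2 * c + b <= m2 + n2 + a ].

From mathcomp Require Import all_boot.
From mathcomp Require Import zify.
From Stdlib Require Import ZArith Lia.

(* Replace a triple (a,b,c) by the coordinates p = a+b, q = b+c
   and b.  Triples with fixed (p,q) form the "fiber" 0 <= b <= min p q, and on
   each fiber both S^A and T^A are cut out by an interval in b:
     S^A : loS p q <= b <= min p q,     T^A : loT p q <= b <= hiT p q,
   with lower/upper bounds given by explicit max/min expressions.  The key
   combinatorial fact is that these two intervals always have the same number
   of points (one is empty iff the other is), so translating b by
   loT - loS inside each fiber is a bijection S^A -> T^A. *)

Local Open Scope Z_scope.

Notation triple := (nat * nat * nat)%type.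

Definition pz (x : triple) : Z := let: (a, b, _) := x in Z.of_nat a + Z.of_nat b.
Definition qz (x : triple) : Z := let: (_, b, c) := x in Z.of_nat b + Z.of_nat c.
Definition bz (x : triple) : Z := let: (_, b, _) := x in Z.of_nat b.

Definition with_middle (x : triple) (b' : Z) : triple :=
  (Z.to_nat (pz x - b'), Z.to_nat b', Z.to_nat (qz x - b')).

Lemma bz_in_range (x : triple) : 0 <= bz x <= Z.min (pz x) (qz x).
Proof. by case: x => [[a b] c] /=; lia. Qed.

Lemma with_middle_coords (x : triple) (b' : Z) :
  0 <= b' <= Z.min (pz x) (qz x) ->
  [/\ pz (with_middle x b') = pz x, qz (with_middle x b') = qz x
    & bz (with_middle x b') = b'].
Proof. by case: x => [[a b] c] /= Hb; split; lia. Qed.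

Lemma with_middle_bz (x y : triple) :
  pz y = pz x -> qz y = qz x -> with_middle y (bz x) = x.
Proof.
case: x => [[a b] c]; case: y => [[a' b'] c'] /= Hp Hq.
by rewrite /with_middle /=; congr (_, _, _); lia.
Qed.

Definition fiber_interval (P : pred triple) (l h : Z -> Z -> Z) : Prop :=
  (forall x, P x <-> l (pz x) (qz x) <= bz x <= h (pz x) (qz x)) /\
  (forall p q, 0 <= p -> 0 <= q -> 0 <= l p q /\ h p q <= Z.min p q).

(* The intervals [l1, h1] and [l2, h2] have the same number of points on every
   fiber: the t-th point past the left end exists in one iff in the other. *)
Definition same_length (l1 h1 l2 h2 : Z -> Z -> Z) : Prop :=
  forall p q t, 0 <= p -> 0 <= q -> 0 <= t ->
    (l1 p q + t <= h1 p q <-> l2 p q + t <= h2 p q).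

Lemma same_length_sym {l1 h1 l2 h2 : Z -> Z -> Z} :
  same_length l1 h1 l2 h2 -> same_length l2 h2 l1 h1.
Proof. by move=> Hlen p q t Hp Hq Ht; apply: iff_sym; apply: Hlen. Qed.

Lemma interval_shift {l1 h1 l2 h2 b : Z} :
  (forall t, 0 <= t -> (l1 + t <= h1 <-> l2 + t <= h2)) ->
  l1 <= b <= h1 -> l2 <= b - l1 + l2 <= h2.
Proof.
move=> Hlen Hb; have [Hfwd _] := Hlen (b - l1) ltac:(lia).
by have := Hfwd ltac:(lia); lia.
Qed.

Definition fiber_shift (l1 l2 : Z -> Z -> Z) (x : triple) : triple :=
  let p := pz x in let q := qz x in with_middle x (bz x - l1 p q + l2 p q).

Lemma fiber_shift_spec {P1 P2 : pred triple} {l1 h1 l2 h2 : Z -> Z -> Z} :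
  fiber_interval P1 l1 h1 -> fiber_interval P2 l2 h2 ->
  same_length l1 h1 l2 h2 ->
  forall x, P1 x ->
    P2 (fiber_shift l1 l2 x) /\ fiber_shift l2 l1 (fiber_shift l1 l2 x) = x.
Proof.
move=> [P1E _] [P2E bounds2] Hlen x /P1E Hx.
have [Hb Hpq] := bz_in_range x.
have Hp : 0 <= pz x by lia.
have Hq : 0 <= qz x by lia.
have [Hl2 Hh2] := bounds2 _ _ Hp Hq.
have Hb' := interval_shift (fun t Ht => Hlen _ _ t Hp Hq Ht) Hx.
set y := fiber_shift l1 l2 x.
have [Ep Eq Eb] : [/\ pz y = pz x, qz y = qz x
    & bz y = bz x - l1 (pz x) (qz x) + l2 (pz x) (qz x)].
  by apply: with_middle_coords; lia.
split; first by apply/P2E; rewrite Ep Eq Eb.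
rewrite /fiber_shift Ep Eq Eb.
have -> : bz x - l1 (pz x) (qz x) + l2 (pz x) (qz x) - l2 (pz x) (qz x)
          + l1 (pz x) (qz x) = bz x by lia.
exact: with_middle_bz.
Qed.

Lemma fiber_interval_bijection (P1 P2 : pred triple) (l1 h1 l2 h2 : Z -> Z -> Z) :
  fiber_interval P1 l1 h1 -> fiber_interval P2 l2 h2 ->
  same_length l1 h1 l2 h2 ->
  exists f : {x : triple | P1 x} -> {x : triple | P2 x}, bijective f.
Proof.
move=> H1 H2 Hlen.
have to2 := fiber_shift_spec H1 H2 Hlen.
have to1 := fiber_shift_spec H2 H1 (same_length_sym Hlen).
exists (fun x => exist P2 _ (proj1 (to2 _ (proj2_sig x)))).
exists (fun y => exist P1 _ (proj1 (to1 _ (proj2_sig y)))).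
- by case=> x Hx; apply: val_inj; exact: (proj2 (to2 _ Hx)).
- by case=> y Hy; apply: val_inj; exact: (proj2 (to1 _ Hy)).
Qed.

Section TypeA2.

Variables m1 m2 n1 n2 : nat.

Local Notation M1 := (Z.of_nat m1).
Local Notation M2 := (Z.of_nat m2).
Local Notation N1 := (Z.of_nat n1).
Local Notation N2 := (Z.of_nat n2).

Definition loS (p q : Z) : Z :=
  Z.max 0 (Z.max (p - Z.min M1 N1) (Z.max (q - Z.min M2 N2)
    (Z.max (p + q - Z.min (M1 + M2) (N1 + N2))
           (Z.max (2 * p - M1 - N1) (2 * q - M2 - N2))))).

Definition loT (p q : Z) : Z :=
  Z.max 0 (Z.max (q - N2) (Z.max (p - M1)
    (Z.max (2 * p - q - M1 - N1) (2 * q - p - M2 - N2)))).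

Definition hiT (p q : Z) : Z :=
  Z.min p (Z.min q (Z.min M2 (Z.min N1 (Z.min (N1 + q - p) (M2 + p - q))))).

Lemma SA_fiber_interval :
  fiber_interval (SA m1 m2 n1 n2) loS (fun p q => Z.min p q).
Proof.
split=> [[[a b] c]|p q _ _]; last by rewrite /loS; lia.
by rewrite /SA /loS /pz /qz /bz !Z.max_lub_iff; split; lia.
Qed.

Lemma TA_fiber_interval : fiber_interval (TA m1 m2 n1 n2) loT hiT.
Proof.
split=> [[[a b] c]|p q _ _]; last by rewrite /loT /hiT; lia.
by rewrite /TA /loT /hiT /pz /qz /bz !Z.max_lub_iff !Z.min_glb_iff; split; lia.
Qed.

(* After distributing t over the maxima, both sides are
   conjunctions of linear inequalities that are equivalent. *)
Lemma SA_TA_same_length : same_length loS (fun p q => Z.min p q) loT hiT.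
Proof.
move=> p q t Hp Hq Ht; rewrite /loS /loT /hiT -!Z.add_max_distr_r.
by rewrite !Z.max_lub_iff !Z.min_glb_iff; lia.
Qed.

End TypeA2.

Theorem lemma4p2 (m1 m2 n1 n2 : nat) :
  exists f : {x : nat * nat * nat | SA m1 m2 n1 n2 x} ->
             {x : nat * nat * nat | TA m1 m2 n1 n2 x},
    bijective f.
Proof.
apply: fiber_interval_bijection (SA_fiber_interval m1 m2 n1 n2)
  (TA_fiber_interval m1 m2 n1 n2) (SA_TA_same_length m1 m2 n1 n2).
Qed.
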